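(* (1) For $n\geq 1$, a $2$-null CRC in $G_n$ with covering radius $\rho\geq 2$, $c_1=1$ and $c_2=3$ exists if and only if $n=2$; in that case its parameter matrix is $[0,4|1,0,3|3,0,1|4,0]$ (realized by the set of even-weight words of a perfect code in $G_2$). (2) For no $n\geq 1$ is there a $2$-null CRC in $G_n$ with covering radius $\rho\geq 2$, $c_1=2$ and $c_2=3$.
   Context: $G_n$: vertex set $\mathbb{Z}^n$, $x\sim y$ iff $\sum_i|x_i-y_i|=1$; weight of $x$ is $\sum_i|x_i|$. For a code $C$ with covering radius $\rho=\max_v d(v,C)$, $C_i=\{v:d(v,C)=i\}$. $C$ is a CRC if for all $i,j$ every vertex of $C_i$ has the same number $\alpha_{ij}$ of neighbours in $C_j$, with $\alpha_{ij}=0$ for $|i-j|>1$; $a_i=\alpha_{ii}$, $b_i=\alpha_{i,i+1}$, $c_i=\alpha_{i,i-1}$, parameter matrix written $[a_0,b_0|c_1,a_1,b_1|\ldots|c_\rho,a_\rho]$. $C$ is $r$-null if $a_0=\cdots=a_{r-1}=0$. A perfect code in $G_n$ is a vertex set meeting every closed ball of radius one in exactly one vertex. *)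

From mathcomp Require Import all_boot all_order all_algebra.
Set Implicit Arguments. Unset Strict Implicit. Unset Printing Implicit Defensive.
Import Order.TTheory GRing.Theory Num.Theory.

Definition V (n : nat) := {ffun 'I_n -> int}.

Definition adj (n : nat) (x y : V n) : Prop :=
  (\sum_(i < n) `|x i - y i|)%N = 1%N.

Definition weight (n : nat) (x : V n) : nat := (\sum_(i < n) `|x i|)%N.

Inductive walk (n : nat) : V n -> V n -> nat -> Prop :=
| walk0 (x : V n) : walk x x 0
| walkS (x y z : V n) (k : nat) : adj x y -> walk y z k -> walk x z k.+1.

Definition distC (n : nat) (C : V n -> Prop) (v : V n) (i : nat) : Prop :=
  (exists c, C c /\ walk v c i) /\
  (forall c j, C c -> walk v c j -> (i <= j)%N).

Definition covering_radius (n : nat) (C : V n -> Prop) (rho : nat) : Prop :=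
  (forall v, exists i, (i <= rho)%N /\ distC C v i) /\
  (exists v, distC C v rho).

Definition nb_count (n : nat) (C : V n -> Prop) (v : V n) (j k : nat) : Prop :=
  exists s : seq (V n), uniq s /\
    (forall y, y \in s <-> (adj v y /\ distC C y j)) /\ size s = k.

Definition is_CRC (n : nat) (C : V n -> Prop) (rho : nat)
    (alpha : nat -> nat -> nat) : Prop :=
  covering_radius C rho /\
  (forall i j, (i <= rho)%N -> (j <= rho)%N ->
     forall v, distC C v i -> nb_count C v j (alpha i j)) /\
  (forall i j, (i <= rho)%N -> (j <= rho)%N ->
     (j.+1 < i)%N \/ (i.+1 < j)%N -> alpha i j = 0%N).

(* r-null: a_0 = ... = a_{r-1} = 0 *)
Definition r_null (r : nat) (alpha : nat -> nat -> nat) : Prop :=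
  forall i, (i < r)%N -> alpha i i = 0%N.

Definition perfect_code (n : nat) (P : V n -> Prop) : Prop :=
  forall v : V n, exists! x, P x /\ (x = v \/ adj v x).

Definition params_0413 (rho : nat) (alpha : nat -> nat -> nat) : Prop :=
  rho = 3%N /\
  alpha 0 0 = 0%N /\ alpha 0 1 = 4%N /\
  alpha 1 0 = 1%N /\ alpha 1 1 = 0%N /\ alpha 1 2 = 3%N /\
  alpha 2 1 = 3%N /\ alpha 2 2 = 0%N /\ alpha 2 3 = 1%N /\
  alpha 3 2 = 4%N /\ alpha 3 3 = 0%N.

(* In a 2-null CRC no two vertices of [C] and no two vertices of [C_1] are
   adjacent, and with [c_2 = 3] a vertex [w] of [C_2] has exactly three
   neighbours in [C_1]. Chasing the code neighbours of these three vertices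
   around [w] produces, when [c_1 = 2], a vertex of [C_1] with three code
   neighbours or a vertex of [C_2] with four neighbours in [C_1].
   When [c_1 = 1], the same chase shows that for every [c] in [C] and every two
   non-opposite directions [a], [b], one of the knight moves [c + 3a + b],
   [c + 3b + a] lies in [C], while two knight moves led by the same direction
   would give a vertex of [C_1] two code neighbours. With three coordinates this
   is impossible by pigeonhole, with one coordinate [c_2 = 3] already is; in the
   plane the moves turn consistently around [c], so [C] contains [c],
   [c + (3, s)] and [c + (-1, 3s)] for a sign [s]. As distinct code vertices are
   at l1-distance at least 4, the distances near [c], and with them all the
   intersection numbers, are then determined. The even-weight words of the Lee
   code [x + 2y = 0 (mod 5)] realise the resulting parameters. *)

From mathcomp Require Import all_boot all_order all_algebra zify.
From Stdlib Require Import Classical.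
Set Implicit Arguments. Unset Strict Implicit. Unset Printing Implicit Defensive.
Import Order.TTheory GRing.Theory Num.Theory.
Local Open Scope ring_scope.

Lemma vecD n (u v : V n) k : (u + v) k = u k + v k.
Proof. by rewrite ffunE. Qed.

Lemma vecN n (u : V n) k : (- u) k = - u k.
Proof. by rewrite ffunE. Qed.

(* Unlike [ffunP], states the entrywise equalities on [V n] itself, so that
   its entries are the same atoms for [lia] as entries of vectors in context. *)
Lemma vec_ext n (u v : V n) : (forall k, u k = v k) -> u = v.
Proof. by move=> H; apply/ffunP => k; apply: H. Qed.

(* [adj] is stated with the [`|m - n|] notation of [IntDist], whose subtraction
   [lia] does not recognise; this converts it to the ring subtraction. *)
Lemma distnE (a b : int) : (`|a - b|)%N = absz (a - b)%R.
Proof. by []. Qed.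

Ltac vec_eq :=
  let k := fresh "k" in apply: vec_ext => k; rewrite ?vecD ?vecN; clear - k; lia.

(** * Unit vectors of [Z^n] *)

Section UnitVectors.
Variable n : nat.
Implicit Types x y d : V n.

Definition uvec (i : 'I_n) (s : bool) : V n :=
  [ffun k => if k == i then (if s then 1%Z else (-1)%Z) else 0%Z].

Definition unit_vec d := exists i s, d = uvec i s.

Lemma uvecE i s k : uvec i s k = if k == i then (if s then 1%Z else (-1)%Z) else 0%Z.
Proof. by rewrite ffunE. Qed.

Lemma adj_sym x y : adj x y -> adj y x.
Proof. by rewrite /adj => <-; apply: eq_bigr => i _; rewrite -abszN opprB. Qed.

Lemma adj_add_uvec x i s : adj x (x + uvec i s).
Proof.
rewrite /adj (bigD1 i) //= big1 => [|k Hk]; rewrite distnE vecD uvecE.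
  by rewrite eqxx; case: s; lia.
by rewrite (negbTE Hk); lia.
Qed.

Lemma adj_add_unit x d : unit_vec d -> adj x (x + d).
Proof. by case=> i [s ->]; apply: adj_add_uvec. Qed.

Lemma adj_uvecP x y : adj x y -> exists i s, y = x + uvec i s.
Proof.
rewrite /adj; under eq_bigr do rewrite distnE; move=> Hxy.
have [i Hi] : exists i, absz (x i - y i)%R != 0%N.
  case: (pickP (fun i => absz (x i - y i)%R != 0%N)) => [i Hi|H0]; first by exists i.
  by move: Hxy; rewrite big1 // => i _; move: (H0 i) => /negbFE/eqP.
move: Hxy; rewrite (bigD1 i) //=; set S := (\sum_(_ < _ | _) _)%N => Hxy.
have /eqP : S = 0%N by lia.
rewrite /S sum_nat_eq0 => /forallP H0.
exists i, (x i < y i); apply: vec_ext => k; rewrite vecD uvecE.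
case: (eqVneq k i) => [->|Hk].
  have : absz (x i - y i)%R = 1%N by lia.
  by case: ifP; lia.
by move: (H0 k); rewrite Hk /= => /eqP Hk0; lia.
Qed.

Lemma unit_vecN d : unit_vec d -> unit_vec (- d).
Proof.
case=> i [s ->]; exists i, (~~ s); apply: vec_ext => k; rewrite vecN !uvecE.
by case: (k == i); case: s => /=; lia.
Qed.

Lemma unit_vec_neqN d : unit_vec d -> d != - d.
Proof.
by case=> i [s ->]; apply/eqP => /ffunP/(_ i); rewrite vecN !uvecE eqxx; case: s; lia.
Qed.

Lemma uvec_neq i j s t : i != j -> uvec i s != uvec j t.
Proof.
by move=> Hij; apply/eqP => /ffunP/(_ i); rewrite !uvecE eqxx (negbTE Hij); case: s; lia.
Qed.

Lemma uvec_neqN i j s t : i != j -> uvec i s != - uvec j t.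
Proof.
move=> Hij; apply/eqP => /ffunP/(_ i).
by rewrite vecN !uvecE eqxx (negbTE Hij); case: s; lia.
Qed.

End UnitVectors.

(* Closes a conjunction of disequalities [x != y] between directions, each of
   which is an assumption up to symmetry and negation of both sides. *)
Ltac neq_dir_hyp := first [ done | rewrite eq_sym; done ].
Ltac neq_dir := first [ neq_dir_hyp | rewrite eqr_opp; neq_dir_hyp
  | rewrite eqr_oppLR; neq_dir_hyp | rewrite -eqr_oppLR; neq_dir_hyp
  | rewrite eq_sym eqr_oppLR; neq_dir_hyp | rewrite eq_sym -eqr_oppLR; neq_dir_hyp
  | rewrite opprK; neq_dir_hyp | rewrite eqr_oppLR opprK; neq_dir_hyp
  | rewrite eq_sym eqr_oppLR opprK; neq_dir_hyp ].
Ltac neq_dirs := repeat (apply/andP; split); neq_dir.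

(** * Distance to a code *)

Section Distance.
Variables (n : nat) (C : V n -> Prop).
Local Notation D := (distC C).
Implicit Types u v : V n.

Lemma distC_uniq v i j : D v i -> D v j -> i = j.
Proof.
move=> [[c [Cc Hc]] Hi] [[c' [Cc' Hc']] Hj].
by apply/eqP; rewrite eqn_leq (Hi _ _ Cc' Hc') (Hj _ _ Cc Hc).
Qed.

Lemma distC0 v : D v 0 <-> C v.
Proof.
split; first by move=> [[c [Cc W]] _]; inversion W; subst.
by move=> Cv; split=> [|//]; exists v; split=> //; constructor.
Qed.

Lemma distC_adj u v i j : adj u v -> D u i -> D v j -> (j <= i.+1)%N.
Proof.
move=> Huv [[c [Cc W]] _] [_ Hj].
by apply: (Hj c) => //; apply: walkS W; apply: adj_sym.
Qed.

Lemma distC_pred v k : D v k.+1 -> exists u, adj v u /\ D u k.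
Proof.
move=> [[c [Cc W]] Hmin]; inversion W as [|x y z k' Hxy Wy]; subst.
exists y; split=> //; split; first by exists c.
by move=> c' j Cc' W'; apply: (Hmin c' j.+1 Cc' (walkS Hxy W')).
Qed.

Lemma distC_below v k m : D v k -> (m <= k)%N -> exists u, D u m.
Proof.
elim: k v => [|k IH] v Dv Hm; first by exists v; have -> : m = 0%N by lia.
case: (ltnP m k.+1) => Hmk; last by exists v; have -> : m = k.+1 by lia.
by case: (distC_pred Dv) => u [_ Du]; apply: (IH u).
Qed.

Lemma nb_count_size_le v j k (t : seq (V n)) : nb_count C v j k -> uniq t ->
  (forall y, y \in t -> adj v y /\ D y j) -> (size t <= k)%N.
Proof. by move=> [s [Us [Hs <-]]] Ut Ht; apply: uniq_leq_size => // y /Ht/Hs. Qed.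

Lemma nb_count_fresh v j k (t : seq (V n)) : nb_count C v j k -> (size t < k)%N ->
  exists y, [/\ adj v y, D y j & y \notin t].
Proof.
move=> [s [Us [Hs Hsz]]] Ht.
case: (boolP (all (mem t) s)) => [/allP Hall|].
  have : (size s <= size t)%N by apply: uniq_leq_size => // y /Hall.
  lia.
rewrite -has_predC => /hasP [y ys /= yt]; exists y.
by case: (Hs y) => /(_ ys) [? ?] _.
Qed.

End Distance.

(** * 2-null CRCs with [c_2 = 3] *)

Section CRC.
Variables (n : nat) (C : V n -> Prop) (rho : nat) (alpha : nat -> nat -> nat).
Hypothesis HC : is_CRC C rho alpha.
Local Notation D := (distC C).
Implicit Types c u v w p q x y z : V n.

Lemma distC_ex v : exists i, D v i.
Proof. by case: HC => [[Hcov _] _]; case: (Hcov v) => i [_ Dv]; exists i. Qed.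

Lemma distC_le_rho v i : D v i -> (i <= rho)%N.
Proof.
move=> Dv; case: HC => [[Hcov _] _]; case: (Hcov v) => j [Hj Dj].
by rewrite (distC_uniq Dv Dj).
Qed.

Lemma code_ex : exists c, C c.
Proof. by case: (distC_ex 0) => i [[c [Cc _]] _]; exists c. Qed.

Lemma crc_nb_count v i j : D v i -> (j <= rho)%N -> nb_count C v j (alpha i j).
Proof. by case: HC => _ [H _] Dv Hj; apply: H (distC_le_rho Dv) Hj v Dv. Qed.

Hypothesis Hnull : r_null 2 alpha.
Hypothesis Hrho : (2 <= rho)%N.

Lemma code_not_adj p q : C p -> adj p q -> ~ C q.
Proof.
move=> Cp Hpq Cq.
have : (size [:: q] <= alpha 0 0)%N.
  apply: (nb_count_size_le (crc_nb_count (proj2 (distC0 C p) Cp) (leq0n _))) => // y.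
  by rewrite inE => /eqP ->; split=> //; apply/distC0.
by rewrite Hnull.
Qed.

Lemma code_nb_dist1 p q : C p -> adj p q -> D q 1.
Proof.
move=> Cp Hpq; case: (distC_ex q) => j Dq.
have := distC_adj Hpq (proj2 (distC0 C p) Cp) Dq.
case: j Dq => [|[|j]] Dq // _.
by move/distC0: Dq => /(code_not_adj Cp Hpq).
Qed.

Lemma code_nb_dist1' p q : C p -> adj q p -> D q 1.
Proof. by move=> Cp /adj_sym; apply: code_nb_dist1. Qed.

Lemma dist1_not_adj u v : D u 1 -> adj u v -> ~ D v 1.
Proof.
move=> Du Huv Dv.
have : (size [:: v] <= alpha 1 1)%N.
  by apply: (nb_count_size_le (crc_nb_count Du (ltnW Hrho))) => // y; rewrite inE => /eqP ->.
by rewrite Hnull.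
Qed.

Lemma dist2_of_dist1_nb u v : D u 1 -> adj u v -> ~ C v -> D v 2.
Proof.
move=> Du Huv NCv; case: (distC_ex v) => j Dv.
have := distC_adj Huv Du Dv.
case: j Dv => [|[|[|j]]] Dv // _; first by move/distC0: Dv.
by case: (dist1_not_adj Du Huv).
Qed.

Lemma dist2_ex : exists w, D w 2.
Proof. by case: HC => [[_ [v Dv]] _]; apply: (distC_below Dv Hrho). Qed.

Lemma code_nbs_le u (t : seq (V n)) : D u 1 -> uniq t ->
  (forall y, y \in t -> adj u y /\ C y) -> (size t <= alpha 1 0)%N.
Proof.
move=> Du Ut Ht; apply: (nb_count_size_le (crc_nb_count Du (leq0n _))) => // y /Ht [? ?].
by split=> //; apply/distC0.
Qed.

Lemma dist1_nbs_le w (t : seq (V n)) : D w 2 -> uniq t ->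
  (forall y, y \in t -> adj w y /\ D y 1) -> (size t <= alpha 2 1)%N.
Proof. by move=> Dw; apply: (nb_count_size_le (crc_nb_count Dw (ltnW Hrho))). Qed.

Lemma no_four_dist1_dirs (Hc2 : alpha 2 1 = 3%N) w d1 d2 d3 d4 : D w 2 ->
  unit_vec d1 -> unit_vec d2 -> unit_vec d3 -> unit_vec d4 ->
  [&& d1 != d2, d1 != d3, d1 != d4, d2 != d3, d2 != d4 & d3 != d4] ->
  D (w + d1) 1 -> D (w + d2) 1 -> D (w + d3) 1 -> D (w + d4) 1 -> False.
Proof.
move=> Dw U1 U2 U3 U4 /and3P [H12 H13 /and4P [H14 H23 H24 H34]] D1 D2 D3 D4.
have : (size [:: (w + d1)%R; (w + d2)%R; (w + d3)%R; (w + d4)%R] <= alpha 2 1)%N.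
  2: by rewrite Hc2.
apply: (dist1_nbs_le Dw).
  by rewrite /= !inE !(inj_eq (addrI w)) !negb_or H12 H13 H14 H23 H24 H34.
by move=> y; rewrite !inE => /or4P [] /eqP ->; split=> //; apply: adj_add_unit.
Qed.

Lemma no_three_code_dirs (Hc1 : alpha 1 0 = 2%N) u d1 d2 d3 : D u 1 ->
  unit_vec d1 -> unit_vec d2 -> unit_vec d3 -> [&& d1 != d2, d1 != d3 & d2 != d3] ->
  C (u + d1) -> C (u + d2) -> C (u + d3) -> False.
Proof.
move=> Du U1 U2 U3 /and3P [H12 H13 H23] C1 C2 C3.
have : (size [:: (u + d1)%R; (u + d2)%R; (u + d3)%R] <= alpha 1 0)%N; last by rewrite Hc1.
apply: (code_nbs_le Du); first by rewrite /= !inE !(inj_eq (addrI u)) !negb_or H12 H13 H23.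
by move=> y; rewrite !inE => /or3P [] /eqP ->; split=> //; apply: adj_add_unit.
Qed.

Lemma no_two_code_nbs (Hc1 : alpha 1 0 = 1%N) u p q : D u 1 ->
  p != q -> adj u p -> adj u q -> C p -> C q -> False.
Proof.
move=> Du Hpq Hp Hq Cp Cq.
have : (size [:: p; q] <= alpha 1 0)%N; last by rewrite Hc1.
apply: (code_nbs_le Du); first by rewrite /= inE andbT Hpq.
by move=> y; rewrite !inE => /orP [] /eqP ->.
Qed.

Lemma no_two_code_dirs (Hc1 : alpha 1 0 = 1%N) u d1 d2 : D u 1 ->
  unit_vec d1 -> unit_vec d2 -> d1 != d2 -> C (u + d1) -> C (u + d2) -> False.
Proof.
move=> Du U1 U2 H12; apply: (no_two_code_nbs Hc1 Du); rewrite ?(inj_eq (addrI u)) //.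
- exact: adj_add_unit.
- exact: adj_add_unit.
Qed.

Lemma dist2_three_dirs (Hc2 : alpha 2 1 = 3%N) w : D w 2 ->
  exists d1 d2 d3, [/\ unit_vec d1, unit_vec d2, unit_vec d3,
    [&& d1 != d2, d1 != d3 & d2 != d3] &
    [/\ D (w + d1) 1, D (w + d2) 1 & D (w + d3) 1]].
Proof.
move=> Dw; have Hn := crc_nb_count Dw (ltnW Hrho); rewrite Hc2 in Hn.
case: (nb_count_fresh (t := [::]) Hn erefl) => y1 [A1 D1 _].
case: (nb_count_fresh (t := [:: y1]) Hn erefl) => y2 [A2 D2]; rewrite inE => N21.
case: (nb_count_fresh (t := [:: y1; y2]) Hn erefl) => y3 [A3 D3].
rewrite !inE negb_or => /andP [N31 N32].
case: (adj_uvecP A1) => i1 [s1 E1]; case: (adj_uvecP A2) => i2 [s2 E2].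
case: (adj_uvecP A3) => i3 [s3 E3]; subst.
exists (uvec i1 s1), (uvec i2 s2), (uvec i3 s3); split=> //.
- by exists i1, s1.
- by exists i2, s2.
- by exists i3, s3.
- by rewrite !(inj_eq (addrI w)) in N21 N31 N32; rewrite eq_sym N21 eq_sym N31 eq_sym N32.
Qed.

Lemma dist1_dirs_of_three (Hc2 : alpha 2 1 = 3%N) w d1 d2 d3 : D w 2 ->
  unit_vec d1 -> unit_vec d2 -> unit_vec d3 -> [&& d1 != d2, d1 != d3 & d2 != d3] ->
  D (w + d1) 1 -> D (w + d2) 1 -> D (w + d3) 1 ->
  forall z, unit_vec z -> D (w + z) 1 -> [\/ z = d1, z = d2 | z = d3].
Proof.
move=> Dw U1 U2 U3 /and3P [H12 H13 H23] D1 D2 D3 z Uz Dz.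
case: (eqVneq z d1) => [->|N1]; first by constructor.
case: (eqVneq z d2) => [->|N2]; first by constructor.
case: (eqVneq z d3) => [->|N3]; first by constructor.
exfalso; apply: (no_four_dist1_dirs Hc2 Dw U1 U2 U3 Uz _ D1 D2 D3 Dz).
by rewrite H12 H13 H23 !(eq_sym _ z) N1 N2 N3.
Qed.

(* [w + z] is adjacent to the code vertex [q = w + z + y], so it lies in [C_1]. *)
Lemma code_nb_dir w (P : V n -> Prop) y q : D w 2 ->
  (forall z, unit_vec z -> D (w + z) 1 -> P z) -> unit_vec y -> C q -> adj (w + y) q ->
  exists z, [/\ P z, unit_vec z, z != - y & q = w + y + z].
Proof.
move=> Dw HP Uy Cq /adj_uvecP [i [s Eq]].
have Uz : unit_vec (uvec i s) by exists i, s.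
exists (uvec i s); split=> //.
  apply: HP => //; apply: (code_nb_dist1 Cq).
  have -> : w + uvec i s = q + - y by rewrite Eq; vec_eq.
  exact: adj_add_unit (unit_vecN Uy).
apply/eqP => Ez; move: Cq; rewrite Eq Ez addrK => /distC0 Dw0.
by have := distC_uniq Dw Dw0.
Qed.

Lemma code_nbs_c1_2 (Hc1 : alpha 1 0 = 2%N) u p1 p2 : D u 1 ->
  (forall q, C q -> adj u q -> q = p1 \/ q = p2) -> C p1 /\ C p2.
Proof.
move=> Du Hp; have Hn := crc_nb_count Du (leq0n _); rewrite Hc1 in Hn.
case: (nb_count_fresh (t := [::]) Hn erefl) => y1 [A1 /distC0 C1 _].
case: (nb_count_fresh (t := [:: y1]) Hn erefl) => y2 [A2 /distC0 C2].
rewrite inE => N12.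
by case: (Hp _ C1 A1) => E1; case: (Hp _ C2 A2) => E2; subst; rewrite ?eqxx in N12.
Qed.

Section NoCRC_c1_2.
Hypotheses (Hc1 : alpha 1 0 = 2%N) (Hc2 : alpha 2 1 = 3%N).

(* The code neighbours of [w + a] and [w - a] put [w + 2b] in [C_2], with
   [C_1]-directions [-b], [a], [-a]; chasing once more, [w + 2a + b] gets three
   code neighbours. *)
Lemma no_dist2_opposite_dirs w a b : D w 2 ->
  unit_vec a -> unit_vec b -> b != a -> b != - a ->
  D (w + a) 1 -> D (w - a) 1 -> D (w + b) 1 ->
  (forall z, unit_vec z -> D (w + z) 1 -> [\/ z = a, z = - a | z = b]) -> False.
Proof.
move=> Dw Ua Ub Nba Nbma Da Dma Db Hdirs.
have Uma := unit_vecN Ua; have Umb := unit_vecN Ub.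
have Naa := unit_vec_neqN Ua; have Nbb := unit_vec_neqN Ub.
have [Caa Cab] : C (w + a + a) /\ C (w + a + b).
  apply: (code_nbs_c1_2 Hc1 Da) => q Cq Hq.
  case: (code_nb_dir Dw Hdirs Ua Cq Hq) => z [[] -> _ Nz ->]; [by left | | by right].
  by rewrite eqxx in Nz.
have Cmab : C (w - a + b).
  apply: (proj2 (code_nbs_c1_2 Hc1 Dma (p1 := w - a - a) _)) => q Cq Hq.
  case: (code_nb_dir Dw Hdirs Uma Cq Hq) => z [[] -> _ Nz ->]; [ | by left | by right].
  by rewrite opprK eqxx in Nz.
pose w' := w + b + b.
have Dw' : D w' 2.
  apply: (dist2_of_dist1_nb Db (adj_add_unit _ Ub)) => Cw'.
  apply: (no_three_code_dirs Hc1 Db Ua Uma Ub _ _ _ Cw'); first by neq_dirs.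
    by rewrite addrAC.
  by rewrite addrAC.
have D'1 : D (w' + - b) 1 by rewrite addrK.
have D'2 : D (w' + a) 1.
  apply: (code_nb_dist1 Cab); have -> : w' + a = w + a + b + b by rewrite /w'; vec_eq.
  exact: adj_add_unit.
have D'3 : D (w' + - a) 1.
  apply: (code_nb_dist1 Cmab); have -> : w' + - a = w - a + b + b by rewrite /w'; vec_eq.
  exact: adj_add_unit.
have Hdirs' := dist1_dirs_of_three Hc2 Dw' Umb Ua Uma ltac:(neq_dirs) D'1 D'2 D'3.
have [_ Cw'aa] : C (w' + a + - b) /\ C (w' + a + a).
  apply: (code_nbs_c1_2 Hc1 D'2) => q Cq Hq.
  case: (code_nb_dir Dw' Hdirs' Ua Cq Hq) => z [[] -> _ Nz ->]; [by left | by right | ].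
  by rewrite eqxx in Nz.
pose m := w + a + a + b.
apply: (no_three_code_dirs Hc1 (u := m) _ Umb Uma Ub ltac:(neq_dirs)).
- by apply: (code_nb_dist1 Caa); apply: adj_add_unit.
- by rewrite addrK.
- by have -> : m + - a = w + a + b by rewrite /m; vec_eq.
- by have -> : m + b = w' + a + a by rewrite /m /w'; vec_eq.
Qed.

Lemma no_dist2_skew_dirs_corner w a b g : D w 2 ->
  unit_vec a -> unit_vec b -> unit_vec g ->
  D (w + a) 1 -> D (w + b) 1 -> D (w + g) 1 ->
  [&& g != b, g != - b & b != - b] ->
  (forall z, unit_vec z -> D (w + z) 1 -> [\/ z = a, z = b | z = g]) ->
  ~ C (w + b + g) -> False.
Proof.
move=> Dw Ua Ub Ug Da Db Dg Hneq Hdirs NCbg.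
have Umb := unit_vecN Ub; have Umg := unit_vecN Ug.
have [Cba Cbb] : C (w + b + a) /\ C (w + b + b).
  apply: (code_nbs_c1_2 Hc1 Db) => q Cq Hq.
  case: (code_nb_dir Dw Hdirs Ub Cq Hq) => z [[] -> _ _ Eq]; subst q.
  - by left.
  - by right.
  - by case: NCbg.
have Cgg : C (w + g + g).
  apply: (proj2 (code_nbs_c1_2 Hc1 Dg (p1 := w + g + a) _)) => q Cq Hq.
  case: (code_nb_dir Dw Hdirs Ug Cq Hq) => z [[] -> _ _ Eq]; subst q.
  - by left.
  - by case: NCbg; rewrite addrAC.
  - by right.
pose v := w + b + g.
have Dv : D v 2 by apply: (dist2_of_dist1_nb Db (adj_add_unit _ Ug)).
apply: (no_four_dist1_dirs Hc2 Dv Umg Umb Ub Ug).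
- move: Hneq => /and3P [Ngb Ngmb Nbb]; have Ngg := unit_vec_neqN Ug.
  by neq_dirs.
- by rewrite addrK.
- by have -> : v + - b = w + g by rewrite /v; vec_eq.
- apply: (code_nb_dist1 Cbb); have -> : v + b = w + b + b + g by rewrite /v; vec_eq.
  exact: adj_add_unit.
- apply: (code_nb_dist1 Cgg); have -> : v + g = w + g + g + b by rewrite /v; vec_eq.
  exact: adj_add_unit.
Qed.

(* If a corner such as [w + b + g] is not in [C], it is a vertex of [C_2] with
   four neighbours in [C_1]; otherwise [w + a + b + g] has three code neighbours. *)
Lemma no_dist2_skew_dirs w a b g : D w 2 -> unit_vec a -> unit_vec b -> unit_vec g ->
  b != a -> b != - a -> g != a -> g != - a -> g != b -> g != - b ->
  D (w + a) 1 -> D (w + b) 1 -> D (w + g) 1 ->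
  (forall z, unit_vec z -> D (w + z) 1 -> [\/ z = a, z = b | z = g]) -> False.
Proof.
move=> Dw Ua Ub Ug Nba Nbma Nga Ngma Ngb Ngmb Da Db Dg Hdirs.
have Naa := unit_vec_neqN Ua; have Nbb := unit_vec_neqN Ub.
have Hdirs_bag z : unit_vec z -> D (w + z) 1 -> [\/ z = b, z = a | z = g].
  by move=> Uz Dz; case: (Hdirs z Uz Dz) => ->; constructor.
have Hdirs_gab z : unit_vec z -> D (w + z) 1 -> [\/ z = g, z = a | z = b].
  by move=> Uz Dz; case: (Hdirs z Uz Dz) => ->; constructor.
case: (classic (C (w + b + g))) => Cbg; last first.
  exact: (no_dist2_skew_dirs_corner Dw Ua Ub Ug Da Db Dg ltac:(neq_dirs) Hdirs Cbg).
case: (classic (C (w + a + g))) => Cag; last first.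
  exact: (no_dist2_skew_dirs_corner Dw Ub Ua Ug Db Da Dg ltac:(neq_dirs) Hdirs_bag Cag).
case: (classic (C (w + a + b))) => Cab; last first.
  exact: (no_dist2_skew_dirs_corner Dw Ug Ua Ub Dg Da Db ltac:(neq_dirs) Hdirs_gab Cab).
pose m := w + a + b + g.
apply: (no_three_code_dirs Hc1 (u := m) _ (unit_vecN Ug) (unit_vecN Ub) (unit_vecN Ua)).
- by apply: (code_nb_dist1 Cab); apply: adj_add_unit.
- by neq_dirs.
- by rewrite addrK.
- by have -> : m + - b = w + a + g by rewrite /m; vec_eq.
- by have -> : m + - a = w + b + g by rewrite /m; vec_eq.
Qed.

Lemma no_dist2_c1_2 w : D w 2 -> False.
Proof.
move=> Dw; case: (dist2_three_dirs Hc2 Dw) => x1 [x2 [x3 [U1 U2 U3 Hd [D1 D2 D3]]]].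
have Hdirs := dist1_dirs_of_three Hc2 Dw U1 U2 U3 Hd D1 D2 D3.
move: Hd => /and3P [N12 N13 N23].
have perm_dirs (y1 y2 y3 : V n) :
    (forall z, [\/ z = x1, z = x2 | z = x3] -> [\/ z = y1, z = y2 | z = y3]) ->
    forall z, unit_vec z -> D (w + z) 1 -> [\/ z = y1, z = y2 | z = y3].
  by move=> Hy z Uz Dz; apply/Hy/Hdirs.
case: (eqVneq x2 (- x1)) => E2.
  subst x2; apply: (no_dist2_opposite_dirs Dw U1 U3 ltac:(neq_dirs) ltac:(neq_dirs) D1 D2 D3).
  by apply: perm_dirs => z [] ->; constructor.
case: (eqVneq x3 (- x1)) => E3.
  subst x3; apply: (no_dist2_opposite_dirs Dw U1 U2 ltac:(neq_dirs) ltac:(neq_dirs) D1 D3 D2).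
  by apply: perm_dirs => z [] ->; constructor.
case: (eqVneq x3 (- x2)) => E32.
  subst x3; apply: (no_dist2_opposite_dirs Dw U2 U1 ltac:(neq_dirs) ltac:(neq_dirs) D2 D3 D1).
  by apply: perm_dirs => z [] ->; constructor.
exact: (no_dist2_skew_dirs Dw U1 U2 U3 ltac:(neq_dirs) ltac:(neq_dirs) ltac:(neq_dirs)
         ltac:(neq_dirs) ltac:(neq_dirs) ltac:(neq_dirs) D1 D2 D3 Hdirs).
Qed.

End NoCRC_c1_2.

Section CRC_c1_1.
Hypotheses (Hc1 : alpha 1 0 = 1%N) (Hc2 : alpha 2 1 = 3%N).

Lemma dist1_code_nb u : D u 1 -> exists q, adj u q /\ C q.
Proof.
move=> Du; have Hn := crc_nb_count Du (leq0n _); rewrite Hc1 in Hn.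
by case: (nb_count_fresh (t := [::]) Hn erefl) => y [A /distC0 Cy _]; exists y.
Qed.

Lemma code_no_common_nb p q m : C p -> C q -> p != q -> adj p m -> adj q m -> False.
Proof.
move=> Cp Cq Npq Hp Hq.
exact: (no_two_code_nbs Hc1 (code_nb_dist1 Cp Hp) Npq (adj_sym Hp) (adj_sym Hq) Cp Cq).
Qed.

Lemma code_dist2 c a b : C c -> unit_vec a -> unit_vec b -> b != - a -> D (c + a + b) 2.
Proof.
move=> Cc Ua Ub Nbma; have Dca := code_nb_dist1 Cc (adj_add_unit c Ua).
apply: (dist2_of_dist1_nb Dca (adj_add_unit _ Ub)) => Ccab.
apply: (no_two_code_dirs Hc1 Dca (unit_vecN Ua) Ub ltac:(neq_dirs) _ Ccab).
by rewrite addrK.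
Qed.

(* [z] is the third direction from [w = c + a + b] to [C_1]; any other position
   of the code neighbour of [w + z] gives [c + a] or [c + b] a second code
   neighbour, or [w] a fourth neighbour in [C_1]. *)
Lemma code_beyond_third_dir c a b : C c -> unit_vec a -> unit_vec b ->
  b != a -> b != - a ->
  exists z, [/\ unit_vec z, z != - a, z != - b & C (c + a + b + z + z)].
Proof.
move=> Cc Ua Ub Nba Nbma.
have Uma := unit_vecN Ua; have Umb := unit_vecN Ub.
have Naa := unit_vec_neqN Ua; have Nbb := unit_vec_neqN Ub.
pose w := c + a + b.
have Dw : D w 2 by apply: code_dist2.
have Dwb : D (w + - b) 1 by rewrite addrK; apply: (code_nb_dist1 Cc); apply: adj_add_unit.
have Dwa : D (w + - a) 1.
  have -> : w + - a = c + b by rewrite /w; vec_eq.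
  by apply: (code_nb_dist1 Cc); apply: adj_add_unit.
have Hn := crc_nb_count Dw (ltnW Hrho); rewrite Hc2 in Hn.
case: (nb_count_fresh (t := [:: w + - b; w + - a]) Hn erefl) => y [Ay Dy].
rewrite !inE negb_or => /andP [Nyb Nya].
case: (adj_uvecP Ay) => i [s Ey]; set z := uvec i s in Ey; subst y.
have Uz : unit_vec z by exists i, s.
rewrite !(inj_eq (addrI w)) in Nyb Nya.
have Nzz := unit_vec_neqN Uz.
case: (dist1_code_nb Dy) => c' [/adj_uvecP [i' [s' Ec']] Cc'].
set t := uvec i' s' in Ec'; have Ut : unit_vec t by exists i', s'.
exists z; split=> //.
case: (eqVneq t z) => [Etz | Ntz]; first by rewrite Ec' Etz in Cc'.
have Ntmz : t != - z.
  by apply/eqP => Etmz; move: Cc'; rewrite Ec' Etmz addrK => /distC0 /(distC_uniq Dw).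
have Dwt : D (w + t) 1.
  apply: (code_nb_dist1' Cc'); have -> : c' = w + t + z by rewrite Ec'; vec_eq.
  exact: adj_add_unit.
exfalso; case: (eqVneq t (- b)) => [Etb | Ntb].
  apply: (no_two_code_dirs Hc1 (u := c + a) _ Uma Uz ltac:(neq_dirs)).
  - by apply: (code_nb_dist1 Cc); apply: adj_add_unit.
  - by rewrite addrK.
  - by move: Cc'; rewrite Ec' Etb; have -> : w + z + - b = c + a + z by rewrite /w; vec_eq.
case: (eqVneq t (- a)) => [Eta | Nta].
  apply: (no_two_code_dirs Hc1 (u := c + b) _ Umb Uz ltac:(neq_dirs)).
  - by apply: (code_nb_dist1 Cc); apply: adj_add_unit.
  - by rewrite addrK.
  - by move: Cc'; rewrite Ec' Eta; have -> : w + z + - a = c + b + z by rewrite /w; vec_eq.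
exact: (no_four_dist1_dirs Hc2 Dw Umb Uma Uz Ut ltac:(neq_dirs) Dwb Dwa Dy Dwt).
Qed.

Lemma code_knight_move c a b : C c -> unit_vec a -> unit_vec b -> b != a -> b != - a ->
  C (c + a + a + a + b) \/ C (c + b + b + b + a).
Proof.
move=> Cc Ua Ub Nba Nbma.
case: (code_beyond_third_dir Cc Ua Ub Nba Nbma) => z [Uz Nzma Nzmb Cz].
case: (eqVneq z a) => [Eza | Nza].
  by left; move: Cz; rewrite Eza; have -> : c + a + b + a + a = c + a + a + a + b by vec_eq.
case: (eqVneq z b) => [Ezb | Nzb].
  by right; move: Cz; rewrite Ezb; have -> : c + a + b + b + b = c + b + b + b + a by vec_eq.
exfalso; pose v := c + a + z.
have Dv : D v 2 by apply: code_dist2 => //; neq_dirs.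
have Nzz := unit_vec_neqN Uz; have Naa := unit_vec_neqN Ua.
apply: (no_four_dist1_dirs Hc2 Dv (unit_vecN Uz) (unit_vecN Ua) Ub Uz ltac:(neq_dirs)).
- rewrite addrK; exact: (code_nb_dist1 Cc (adj_add_unit _ Ua)).
- have -> : v + - a = c + z by rewrite /v; vec_eq.
  exact: (code_nb_dist1 Cc (adj_add_unit _ Uz)).
- apply: (code_nb_dist1' Cz); have -> : c + a + b + z + z = v + b + z by rewrite /v; vec_eq.
  exact: adj_add_unit.
- apply: (code_nb_dist1' Cz); have -> : c + a + b + z + z = v + z + b by rewrite /v; vec_eq.
  exact: adj_add_unit.
Qed.

Lemma code_knight_moves_uniq c x y y' : C (c + x + x + x + y) -> C (c + x + x + x + y') ->
  unit_vec y -> unit_vec y' -> y != y' -> False.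
Proof.
move=> C1 C2 Uy Uy' Nyy; pose p := c + x + x + x.
have Npp : p + y != p + y' by rewrite (inj_eq (addrI p)).
case: (eqVneq y' (- y)) => [Ey' | Ny'].
  apply: (code_no_common_nb C1 C2 Npp (m := p)).
    by move: (adj_add_unit (p + y) (unit_vecN Uy)); rewrite addrK.
  by rewrite Ey'; move: (adj_add_unit (p + - y) Uy); rewrite addrNK.
apply: (code_no_common_nb C1 C2 Npp (m := p + y + y')); first exact: adj_add_unit.
by rewrite [p + y + y']addrAC; apply: adj_add_unit.
Qed.

End CRC_c1_1.
End CRC.

(* Closes the goal from two code vertices [c + 3x + y], [c + 3x + y'] with [y != y']. *)
Ltac knight_moves_clash knight_uniq :=
  match goal with
  | A : _ (_ + ?x + ?x + ?x + ?y), B : _ (_ + ?x + ?x + ?x + ?y') |- _ =>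
      tryif constr_eq y y' then fail else
      exact: (knight_uniq _ _ _ _ A B ltac:(assumption) ltac:(assumption) ltac:(neq_dirs))
  end.

Lemma no_crc_c1_2 n (C : V n -> Prop) rho alpha :
  is_CRC C rho alpha -> r_null 2 alpha -> (2 <= rho)%N ->
  alpha 1 0 = 2%N -> alpha 2 1 = 3%N -> False.
Proof.
move=> HC Hnull Hrho Hc1 Hc2; case: (dist2_ex HC Hrho) => w.
exact: (no_dist2_c1_2 HC Hnull Hrho Hc1 Hc2).
Qed.

Lemma no_crc_dim1 (C : V 1 -> Prop) rho alpha :
  is_CRC C rho alpha -> (2 <= rho)%N -> alpha 2 1 = 3%N -> False.
Proof.
move=> HC Hrho Hc2; case: (dist2_ex HC Hrho) => w Dw.
case: (dist2_three_dirs HC Hrho Hc2 Dw) => x1 [x2 [x3 [U1 U2 U3 Hd _]]].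
move: Hd; case: U1 => i1 [s1 ->]; case: U2 => i2 [s2 ->]; case: U3 => i3 [s3 ->].
rewrite (ord1 i1) (ord1 i2) (ord1 i3).
by case: s1; case: s2; case: s3; rewrite ?eqxx ?andbF.
Qed.

(* Each of the five pairs of directions [(a,b), (a,g), (b,g), (-a,b), (-a,g)] gives
   a knight move from [c] into [C] led by one of its two directions; by pigeonhole
   two of them are led by the same direction, which [code_knight_moves_uniq] forbids. *)
Lemma no_crc_c1_1_dim_ge3 n (C : V n -> Prop) rho alpha :
  is_CRC C rho alpha -> r_null 2 alpha -> (2 <= rho)%N ->
  alpha 1 0 = 1%N -> alpha 2 1 = 3%N -> (3 <= n)%N -> False.
Proof.
move=> HC Hnull Hrho Hc1 Hc2 Hn; case: (code_ex HC) => c Cc.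
have [h0 h1 h2] : [/\ (0 < n)%N, (1 < n)%N & (2 < n)%N] by split; lia.
pose a := uvec (Ordinal h0) true; pose b := uvec (Ordinal h1) true.
pose g := uvec (Ordinal h2) true.
have Ua : unit_vec a by exists (Ordinal h0), true.
have Ub : unit_vec b by exists (Ordinal h1), true.
have Ug : unit_vec g by exists (Ordinal h2), true.
have Uma := unit_vecN Ua; have Naa := unit_vec_neqN Ua.
have Nba : b != a by apply: uvec_neq.
have Nbma : b != - a by apply: uvec_neqN.
have Nga : g != a by apply: uvec_neq.
have Ngma : g != - a by apply: uvec_neqN.
have Ngb : g != b by apply: uvec_neq.
have Ngmb : g != - b by apply: uvec_neqN.
have K := code_knight_move HC Hnull Hrho Hc1 Hc2 Cc.
case: (K _ _ Ua Ub Nba Nbma) => H1; case: (K _ _ Ua Ug Nga Ngma) => H2;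
case: (K _ _ Ub Ug Ngb Ngmb) => H3;
case: (K _ _ Uma Ub ltac:(neq_dirs) ltac:(neq_dirs)) => H4;
case: (K _ _ Uma Ug ltac:(neq_dirs) ltac:(neq_dirs)) => H5;
  knight_moves_clash (code_knight_moves_uniq HC Hnull Hc1).
Qed.

(** * The plane *)

Lemma walkS_inv n (x z : V n) k : walk x z k.+1 -> exists y, adj x y /\ walk y z k.
Proof. by move=> W; inversion W as [|x' y z' k' Hxy Wy]; subst; exists y. Qed.

Lemma walk0_inv n (x z : V n) : walk x z 0 -> x = z.
Proof. by move=> W; inversion W. Qed.

Definition pt (x y : int) : V 2 := [ffun k : 'I_2 => if val k == 0%N then x else y].

Lemma pt0 x y : pt x y ord0 = x.
Proof. by rewrite ffunE. Qed.

Lemma pt1 x y : pt x y ord_max = y.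
Proof. by rewrite ffunE. Qed.

Lemma vec2_ext (p q : V 2) : p ord0 = q ord0 -> p ord_max = q ord_max -> p = q.
Proof.
move=> H0 H1; apply: vec_ext => -[[|[|k]] Hk] //.
- by have -> : Ordinal Hk = ord0 by apply: val_inj.
- by have -> : Ordinal Hk = ord_max by apply: val_inj.
Qed.

Ltac vec2_eq := apply: vec2_ext; rewrite ?vecD ?vecN ?uvecE ?pt0 ?pt1 /=; lia.

Lemma ptD x y x' y' : pt x y + pt x' y' = pt (x + x') (y + y').
Proof. by vec2_eq. Qed.

Lemma sum_ord2 (F : 'I_2 -> nat) : (\sum_(i < 2) F i = F ord0 + F ord_max)%N.
Proof. by rewrite big_ord_recl big_ord1; congr (_ + F _)%N; apply: val_inj. Qed.

Definition l1dist (p q : V 2) : nat :=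
  (absz (p ord0 - q ord0)%R + absz (p ord_max - q ord_max)%R)%N.

Lemma adj_l1dist (p q : V 2) : adj p q <-> l1dist p q = 1%N.
Proof. by rewrite /adj sum_ord2 !distnE. Qed.

Lemma adj_add_pt (v : V 2) x y : (absz x + absz y)%N = 1%N -> adj v (v + pt x y).
Proof. by move=> H; apply/adj_l1dist; rewrite /l1dist !vecD pt0 pt1; lia. Qed.

Lemma walk_l1dist (x y : V 2) k : walk x y k -> (l1dist x y <= k)%N.
Proof.
elim=> [z|x' y' z k' /adj_l1dist Hxy _ IH]; first by rewrite /l1dist; lia.
by rewrite /l1dist in Hxy IH *; lia.
Qed.

Lemma l1dist_walk k (x y : V 2) : l1dist x y = k -> walk x y k.
Proof.
elim: k x => [|k IH] x Hxy.
  have -> : x = y by apply: vec2_ext; rewrite /l1dist in Hxy; lia.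
  exact: walk0.
pose m : V 2 :=
  if x ord0 < y ord0 then x + pt 1 0 else if y ord0 < x ord0 then x + pt (-1) 0
  else if x ord_max < y ord_max then x + pt 0 1 else x + pt 0 (-1).
apply: (@walkS _ x m); rewrite ?adj_l1dist /m /l1dist in Hxy *.
  by case: ifP => ?; [|case: ifP => ?; [|case: ifP => ?]]; rewrite !vecD !pt0 !pt1; lia.
apply: IH; rewrite /m /l1dist.
by case: ifP => ?; [|case: ifP => ?; [|case: ifP => ?]]; rewrite !vecD !pt0 !pt1; lia.
Qed.

Lemma distC_l1 (C : V 2 -> Prop) v i : (exists2 q, C q & l1dist v q = i) ->
  (forall q, C q -> (i <= l1dist v q)%N) -> distC C v i.
Proof.
move=> [q Cq Hq] Hmin; split; first by exists q; split=> //; apply: l1dist_walk.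
by move=> c j Cc W; apply: leq_trans (Hmin c Cc) (walk_l1dist W).
Qed.

Lemma adj_dim2P (s : int) (v y : V 2) : s = 1 \/ s = -1 -> adj v y ->
  [\/ y = v + pt 1 0, y = v + pt (-1) 0, y = v + pt 0 s | y = v + pt 0 (- s)].
Proof.
move=> Hs /adj_l1dist; rewrite /l1dist => Hvy.
have [[h0 h1]|[[h0 h1]|[[h0 h1]|[h0 h1]]]] :
  (y ord0 = v ord0 + 1 /\ y ord_max = v ord_max) \/
  (y ord0 = v ord0 - 1 /\ y ord_max = v ord_max) \/
  (y ord0 = v ord0 /\ y ord_max = v ord_max + s) \/
  (y ord0 = v ord0 /\ y ord_max = v ord_max - s) by lia.
- by constructor 1; vec2_eq.
- by constructor 2; vec2_eq.
- by constructor 3; vec2_eq.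
- by constructor 4; vec2_eq.
Qed.

Lemma nb_count_dim2 (C : V 2 -> Prop) (s : int) v j k d1 d2 d3 d4 : s = 1 \/ s = -1 ->
  nb_count C v j k ->
  distC C (v + pt 1 0) d1 -> distC C (v + pt (-1) 0) d2 ->
  distC C (v + pt 0 s) d3 -> distC C (v + pt 0 (- s)) d4 ->
  k = ((d1 == j) + (d2 == j) + (d3 == j) + (d4 == j))%N.
Proof.
move=> Hs [t [Ut [Ht <-]]] D1 D2 D3 D4.
pose L := [:: v + pt 1 0; v + pt (-1) 0; v + pt 0 s; v + pt 0 (- s)].
have UL : uniq L.
  rewrite /L /= !inE !negb_or !(inj_eq (addrI v)) -!andbA.
  by repeat (apply/andP; split); try done; apply/eqP => /ffunP H;
    move: (H ord0) (H ord_max); rewrite !pt0 !pt1; lia.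
have sub : {subset t <= L}.
  by move=> y /Ht [/(adj_dim2P Hs) Hy _]; rewrite /L !inE; case: Hy => ->; rewrite eqxx ?orbT.
have -> : size t = count (mem t) L.
  rewrite -size_filter; apply/perm_size/uniq_perm => //; first exact: filter_uniq.
  move=> y; rewrite mem_filter; apply/idP/andP => [yt|[]//]; split=> //; exact: sub.
have E y d : adj v y -> distC C y d -> (y \in t) = (d == j).
  move=> Ay Dy; apply/idP/eqP => [/Ht [_ Dj]|Ed]; first exact: distC_uniq Dy Dj.
  by apply/Ht; split=> //; rewrite -Ed.
rewrite /L /= (E _ _ _ D1) ?(E _ _ _ D2) ?(E _ _ _ D3) ?(E _ _ _ D4) ?addn0 ?addnA //;
  apply: adj_add_pt; lia.
Qed.

Section Dim2.
Variables (C : V 2 -> Prop) (rho : nat) (alpha : nat -> nat -> nat).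
Hypotheses (HC : is_CRC C rho alpha) (Hnull : r_null 2 alpha) (Hrho : (2 <= rho)%N).
Hypotheses (Hc1 : alpha 1 0 = 1%N) (Hc2 : alpha 2 1 = 3%N).
Local Notation D := (distC C).

Lemma code_l1_sep p q : C p -> C q -> p = q \/ (4 <= l1dist p q)%N.
Proof.
move=> Cp Cq; case: (ltnP (l1dist p q) 4) => Hd; last by right.
left; have [H0|[H1|[H2|H3]]] : (l1dist p q = 0 \/ l1dist p q = 1 \/
    l1dist p q = 2 \/ l1dist p q = 3)%N by lia.
- by apply: vec2_ext; rewrite /l1dist in H0; lia.
- by case: (code_not_adj HC Hnull Cp (proj2 (adj_l1dist p q) H1)).
- case: (eqVneq p q) => [// | Npq].
  case: (walkS_inv (l1dist_walk H2)) => m [Apm /walkS_inv [q' [Amq /walk0_inv Eq]]].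
  subst q'; case: (code_no_common_nb HC Hnull Hc1 Cp Cq Npq Apm (adj_sym Amq)).
- case: (walkS_inv (l1dist_walk H3)) => m1 [A1 /walkS_inv [m2 [A2]]].
  case/walkS_inv => q' [A3 /walk0_inv Eq].
  subst q'; case: (dist1_not_adj HC Hnull Hrho (code_nb_dist1 HC Hnull Cp A1) A2).
  exact: (code_nb_dist1' HC Hnull Cq A3).
Qed.

(* The knight moves from [c] in the four quadrants are led by four distinct
   directions, so they turn consistently around [c]. *)
Lemma code_knight_pair_dim2 c : C c ->
  exists sg : int, [/\ sg = 1 \/ sg = -1, C (c + pt 3 sg) & C (c + pt (-1) (3 * sg))].
Proof.
move=> Cc; pose a : V 2 := uvec ord0 true; pose b : V 2 := uvec ord_max true.
have Ua : unit_vec a by exists ord0, true.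
have Ub : unit_vec b by exists ord_max, true.
have Uma := unit_vecN Ua; have Umb := unit_vecN Ub.
have Naa := unit_vec_neqN Ua; have Nbb := unit_vec_neqN Ub.
have Nba : b != a by apply: uvec_neq.
have Nbma : b != - a by apply: uvec_neqN.
have K := code_knight_move HC Hnull Hrho Hc1 Hc2 Cc.
case: (K _ _ Ua Ub Nba Nbma) => H1; case: (K _ _ Ua Umb ltac:(neq_dirs) ltac:(neq_dirs)) => H2;
case: (K _ _ Uma Ub ltac:(neq_dirs) ltac:(neq_dirs)) => H3;
case: (K _ _ Uma Umb ltac:(neq_dirs) ltac:(neq_dirs)) => H4;
  try (exfalso; knight_moves_clash (code_knight_moves_uniq HC Hnull Hc1)).
- exists 1; split; first by left.
    by have -> : c + pt 3 1 = c + a + a + a + b by vec2_eq.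
  by have -> : c + pt (-1) (3 * 1) = c + b + b + b + - a by vec2_eq.
- exists (-1); split; first by right.
    by have -> : c + pt 3 (-1) = c + a + a + a + - b by vec2_eq.
  by have -> : c + pt (-1) (3 * -1) = c + - b + - b + - b + - a by vec2_eq.
Qed.

Section AroundCode.
Variables (c : V 2) (sg : int).
Hypotheses (Hsg : sg = 1 \/ sg = -1) (Cc : C c).
Hypotheses (Cp1 : C (c + pt 3 sg)) (Cp2 : C (c + pt (-1) (3 * sg))).

(* Near [c], the distance to [C] is attained at one of the three known code
   vertices: by [code_l1_sep], any other code vertex is at l1-distance at least 4
   from each of them, expressed in coordinates [(q0, q1)] relative to [c]. *)
Lemma distC_near (v : V 2) (x y : int) (i : nat) : v = c + pt x y ->
  ((absz x + absz y)%N = i \/ (absz (x - 3)%R + absz (y - sg)%R)%N = i \/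
   (absz (x + 1)%R + absz (y - 3 * sg)%R)%N = i) ->
  (forall q0 q1 : int, ((q0 = 0 /\ q1 = 0) \/ (4 <= absz q0 + absz q1)%N) ->
     ((q0 = 3 /\ q1 = sg) \/ (4 <= absz (q0 - 3)%R + absz (q1 - sg)%R)%N) ->
     ((q0 = -1 /\ q1 = 3 * sg) \/ (4 <= absz (q0 + 1)%R + absz (q1 - 3 * sg)%R)%N) ->
     (i <= absz (x - q0)%R + absz (y - q1)%R)%N) ->
  D v i.
Proof.
move=> -> Hat Hmin; apply: distC_l1.
  case: Hat => [H|[H|H]]; [exists c | exists (c + pt 3 sg) | exists (c + pt (-1) (3 * sg))] => //;
    rewrite /l1dist !vecD !pt0 !pt1; lia.
move=> q Cq.
have sep p : C p -> (p ord0 = q ord0 /\ p ord_max = q ord_max) \/ (4 <= l1dist p q)%N.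
  by move=> Cp; case: (code_l1_sep Cp Cq) => [->|]; [left | right].
move: (sep _ Cc) (sep _ Cp1) (sep _ Cp2); rewrite /l1dist !vecD !pt0 !pt1 => S1 S2 S3.
(* One [lia] call per code vertex: a single call yields a proof term too large
   for an independent kernel re-check. *)
have P1 : (q ord0 - c ord0 = 0 /\ q ord_max - c ord_max = 0) \/
    (4 <= absz (q ord0 - c ord0)%R + absz (q ord_max - c ord_max)%R)%N by clear -S1; lia.
have P2 : (q ord0 - c ord0 = 3 /\ q ord_max - c ord_max = sg) \/
    (4 <= absz (q ord0 - c ord0 - 3)%R + absz (q ord_max - c ord_max - sg)%R)%N
  by clear -S2; lia.
have P3 : (q ord0 - c ord0 = -1 /\ q ord_max - c ord_max = 3 * sg) \/
    (4 <= absz (q ord0 - c ord0 + 1)%R + absz (q ord_max - c ord_max - 3 * sg)%R)%N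
  by clear -S3; lia.
by have := Hmin _ _ P1 P2 P3; clear; lia.
Qed.

Ltac distC_near_tac := rewrite -?addrA ?ptD; apply: distC_near;
  [reflexivity | clear -Hsg; lia | move=> ? ?; clear -Hsg; lia].

Lemma alpha_at v i j d1 d2 d3 d4 : D v i -> (j <= rho)%N ->
  D (v + pt 1 0) d1 -> D (v + pt (-1) 0) d2 -> D (v + pt 0 sg) d3 -> D (v + pt 0 (- sg)) d4 ->
  alpha i j = ((d1 == j) + (d2 == j) + (d3 == j) + (d4 == j))%N.
Proof. by move=> Dv Hj; apply: nb_count_dim2 Hsg (crc_nb_count HC Dv Hj). Qed.

Lemma far_dist3 : D (c + pt 1 (2 * sg)) 3.
Proof. by distC_near_tac. Qed.

Lemma alpha3E j : (j <= rho)%N -> alpha 3 j = (4 * (j == 2))%N.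
Proof.
move=> Hj; rewrite (@alpha_at (c + pt 1 (2 * sg)) 3 j 2 2 2 2) //; last 4 first.
- by distC_near_tac.
- by distC_near_tac.
- by distC_near_tac.
- by distC_near_tac.
- by rewrite eq_sym; case: (j == 2).
- exact: far_dist3.
Qed.

(* A vertex [u] at distance 3 has all four neighbours at distance 2, so no vertex
   at distance 4 can lie beyond it. *)
Lemma radius_dim2 : rho = 3%N.
Proof.
have Hr3 : (3 <= rho)%N := distC_le_rho HC far_dist3.
apply/eqP; rewrite eqn_leq Hr3 andbT leqNgt; apply/negP => Hr4.
case: HC => [[_ [v Dv]] _]; case: (distC_below Dv Hr4) => z Dz.
case: (distC_pred Dz) => u [Azu Du].
case: (distC_ex HC (u + pt 1 0)) => d1 D1; case: (distC_ex HC (u + pt (-1) 0)) => d2 D2.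
case: (distC_ex HC (u + pt 0 sg)) => d3 D3; case: (distC_ex HC (u + pt 0 (- sg))) => d4 D4.
have := alpha_at Du (ltnW Hr3) D1 D2 D3 D4; rewrite alpha3E ?(ltnW Hr3) //.
have Hz : [\/ d1 = 4, d2 = 4, d3 = 4 | d4 = 4]%N.
  by case: (adj_dim2P Hsg (adj_sym Azu)) => Ez; rewrite -Ez in D1 D2 D3 D4;
    [constructor 1 | constructor 2 | constructor 3 | constructor 4]; apply: distC_uniq Dz.
by case: Hz => ->; rewrite /=; do ![case: eqP => _].
Qed.

Lemma params_dim2 : params_0413 rho alpha.
Proof.
have Hr := radius_dim2.
have A01 : alpha 0 1 = 4%N.
  by rewrite (@alpha_at c 0 1 1 1 1 1) ?Hr //; first exact/distC0; distC_near_tac.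
have A12 : alpha 1 2 = 3%N.
  rewrite (@alpha_at (c + pt 1 0) 1 2 2 0 2 2) ?Hr //; by distC_near_tac.
have A22 : alpha 2 2 = 0%N.
  rewrite (@alpha_at (c + pt 1 sg) 2 2 1 1 3 1) ?Hr //; by distC_near_tac.
have A23 : alpha 2 3 = 1%N.
  rewrite (@alpha_at (c + pt 1 sg) 2 3 1 1 3 1) ?Hr //; by distC_near_tac.
rewrite /params_0413 Hr Hc1 Hc2 A01 A12 A22 A23 !alpha3E ?Hr //.
by rewrite !Hnull.
Qed.

End AroundCode.
End Dim2.

(** * The even-weight Lee code *)

Definition lee_code (x : V 2) : Prop := ((x ord0 + 2 * x ord_max) %% 5)%Z = 0.

Definition even_lee_code (x : V 2) : Prop := lee_code x /\ ~~ odd (weight x).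

(* [even_lee_code] is the class [x + 7 y = 0 mod 10]; a step changes [x + 7 y] by
   [±1] or [±7], so the distance to the code only depends on this residue. *)
Definition res10 (v : V 2) : nat := absz ((v ord0 + 7 * v ord_max) %% 10)%Z.

Definition dist_of_res (r : nat) : nat := nth 0%N [:: 0; 1; 2; 1; 2; 3; 2; 1; 2; 1]%N r.

Definition steps10 : seq nat := [:: 1; 9; 7; 3]%N.

Lemma weight_dim2 (v : V 2) : weight v = (absz (v ord0) + absz (v ord_max))%N.
Proof. by rewrite /weight sum_ord2. Qed.

Lemma even_lee_codeE (v : V 2) : even_lee_code v <-> res10 v = 0%N.
Proof. by rewrite /even_lee_code /lee_code /res10 weight_dim2; split=> [[]|]; lia. Qed.

Lemma res10_iota (v : V 2) : res10 v \in iota 0 10.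
Proof. by rewrite mem_iota /res10; lia. Qed.

Lemma res10_pt (v : V 2) x y : res10 (v + pt x y) = absz (((res10 v)%:Z + x + 7 * y) %% 10)%Z.
Proof. by rewrite /res10 !vecD !pt0 !pt1; lia. Qed.

Lemma adj_res10 (u y : V 2) : adj u y ->
  exists2 d, d \in steps10 & res10 y = ((res10 u + d) %% 10)%N.
Proof.
case/(adj_dim2P (or_introl erefl)) => ->; rewrite res10_pt.
- by exists 1%N => //; lia.
- by exists 9%N => //; lia.
- by exists 7%N => //; lia.
- by exists 3%N => //; lia.
Qed.

Lemma res10_adj (v : V 2) d : d \in steps10 ->
  exists y, adj v y /\ res10 y = ((res10 v + d) %% 10)%N.
Proof.
rewrite !inE => /or4P [] /eqP ->.
- by exists (v + pt 1 0); split; [apply: adj_add_pt | rewrite res10_pt; lia].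
- by exists (v + pt (-1) 0); split; [apply: adj_add_pt | rewrite res10_pt; lia].
- by exists (v + pt 0 1); split; [apply: adj_add_pt | rewrite res10_pt; lia].
- by exists (v + pt 0 (-1)); split; [apply: adj_add_pt | rewrite res10_pt; lia].
Qed.

Lemma dist_of_res_step_table : all (fun r => all (fun d =>
  dist_of_res r <= (dist_of_res ((r + d) %% 10)).+1) steps10)%N (iota 0 10).
Proof. by []. Qed.

Definition descent (r : nat) : nat := nth 1%N [:: 1; 9; 1; 7; 9; 9; 1; 3; 9; 1]%N r.

Lemma descent_table : all (fun r => (descent r \in steps10) &&
  ((r == 0%N) || (dist_of_res ((r + descent r) %% 10) == (dist_of_res r).-1)) &&
  ((dist_of_res r == 0%N) ==> (r == 0%N))) (iota 0 10).
Proof. by []. Qed.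

Lemma walk_even_lee_ge (v c : V 2) j : walk v c j -> even_lee_code c ->
  (dist_of_res (res10 v) <= j)%N.
Proof.
elim=> [x /even_lee_codeE -> // | x y z k Hxy _ IH Cz].
case: (adj_res10 Hxy) => d Hd Ey.
have := allP (allP dist_of_res_step_table _ (res10_iota x)) d Hd.
by rewrite -Ey; have := IH Cz; lia.
Qed.

Lemma walk_even_lee_ex m (v : V 2) : dist_of_res (res10 v) = m ->
  exists c, even_lee_code c /\ walk v c m.
Proof.
elim: m v => [|m IH] v Hv;
  move: (allP descent_table _ (res10_iota v)) => /andP [/andP [Hd Hdesc] H0].
  exists v; split; last exact: walk0.
  by apply/even_lee_codeE; move: H0; rewrite Hv eqxx => /eqP.
case: (res10_adj v Hd) => y [Ay Ey].
have Nv0 : res10 v != 0%N by apply/eqP => E; move: Hv; rewrite E.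
case: (IH y); first by move: Hdesc; rewrite (negbTE Nv0) Ey Hv => /eqP.
by move=> c [Cc W]; exists c; split=> //; apply: walkS W.
Qed.

Lemma distC_even_lee (v : V 2) : distC even_lee_code v (dist_of_res (res10 v)).
Proof.
split; first exact: walk_even_lee_ex.
by move=> c j Cc W; apply: walk_even_lee_ge W Cc.
Qed.

Lemma distC_even_leeE (v : V 2) i : distC even_lee_code v i -> i = dist_of_res (res10 v).
Proof. by move=> Dv; apply: distC_uniq Dv (distC_even_lee v). Qed.

Definition alpha_even_lee (i j : nat) : nat :=
  nth 0%N (nth [::] [:: [:: 0; 4; 0; 0]; [:: 1; 0; 3; 0]; [:: 0; 3; 0; 1]; [:: 0; 0; 4; 0]]%N i) j.

Lemma dist_of_res_le3 : all (fun r => dist_of_res r <= 3)%N (iota 0 10).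
Proof. by []. Qed.

Lemma alpha_even_lee_table : all (fun r => all (fun j =>
  count (fun d => dist_of_res ((r + d) %% 10) == j) steps10 == alpha_even_lee (dist_of_res r) j)
  (iota 0 4))%N (iota 0 10).
Proof. by []. Qed.

Lemma alpha_even_lee_tridiag : all (fun i => all (fun j =>
  ((j.+1 < i) || (i.+1 < j)) ==> (alpha_even_lee i j == 0)) (iota 0 4))%N (iota 0 4).
Proof. by []. Qed.

Lemma even_lee_crc : is_CRC even_lee_code 3 alpha_even_lee.
Proof.
split; [split | split].
- move=> v; exists (dist_of_res (res10 v)); split; last exact: distC_even_lee.
  exact: (allP dist_of_res_le3 _ (res10_iota v)).
- exists (pt 5 0); have := distC_even_lee (pt 5 0).
  by have -> : res10 (pt 5 0) = 5%N by rewrite /res10 pt0 pt1; lia.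
- move=> i j _ Hj v /distC_even_leeE Ei.
  pose L := [:: v + pt 1 0; v + pt (-1) 0; v + pt 0 1; v + pt 0 (-1)].
  exists [seq y <- L | dist_of_res (res10 y) == j]; split; [|split].
  + apply: filter_uniq; rewrite /L /= !inE !negb_or !(inj_eq (addrI v)) -!andbA.
    by repeat (apply/andP; split); try done; apply/eqP => /ffunP H;
      move: (H ord0) (H ord_max); rewrite !pt0 !pt1; lia.
  + move=> y; rewrite mem_filter; split.
      move=> /andP [/eqP Hy yL]; split; last by rewrite -Hy; exact: distC_even_lee.
      by move: yL; rewrite /L !inE => /or4P [] /eqP ->; apply: adj_add_pt.
    move=> [Ay /distC_even_leeE ->]; rewrite eqxx /L !inE.
    by case: (adj_dim2P (or_introl erefl) Ay) => ->; rewrite eqxx ?orbT.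
  + have Hj' : j \in iota 0 4 by rewrite mem_iota.
    rewrite Ei; have /eqP <- := allP (allP alpha_even_lee_table _ (res10_iota v)) j Hj'.
    have E1 : res10 (v + pt 1 0) = ((res10 v + 1) %% 10)%N by rewrite res10_pt; lia.
    have E2 : res10 (v + pt (-1) 0) = ((res10 v + 9) %% 10)%N by rewrite res10_pt; lia.
    have E3 : res10 (v + pt 0 1) = ((res10 v + 7) %% 10)%N by rewrite res10_pt; lia.
    have E4 : res10 (v + pt 0 (-1)) = ((res10 v + 3) %% 10)%N by rewrite res10_pt; lia.
    by rewrite size_filter /L /= E1 E2 E3 E4.
- move=> i j Hi Hj Hij.
  have Hi' : i \in iota 0 4 by rewrite mem_iota.
  have Hj' : j \in iota 0 4 by rewrite mem_iota.
  apply/eqP; move: (allP (allP alpha_even_lee_tridiag _ Hi') _ Hj') => /implyP; apply.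
  by case: Hij => ->; rewrite ?orbT.
Qed.

Lemma lee_code_perfect : perfect_code lee_code.
Proof.
move=> v.
have [x [Px Hx]] : exists x, lee_code x /\ (x = v \/ adj v x).
  have step x y : (absz x + absz y)%N = 1%N -> lee_code (v + pt x y) ->
      exists x', lee_code x' /\ (x' = v \/ adj v x').
    by move=> Hxy Px; exists (v + pt x y); split=> //; right; apply: adj_add_pt.
  have [E|[E|[E|[E|E]]]] : ((v ord0 + 2 * v ord_max) %% 5 = 0)%Z \/
    ((v ord0 + 2 * v ord_max) %% 5 = 1)%Z \/ ((v ord0 + 2 * v ord_max) %% 5 = 2)%Z \/
    ((v ord0 + 2 * v ord_max) %% 5 = 3)%Z \/ ((v ord0 + 2 * v ord_max) %% 5 = 4)%Z by lia.
  - by exists v; split=> //; left.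
  - by apply: (step (-1) 0) => //; rewrite /lee_code !vecD !pt0 !pt1; lia.
  - by apply: (step 0 (-1)) => //; rewrite /lee_code !vecD !pt0 !pt1; lia.
  - by apply: (step 0 1) => //; rewrite /lee_code !vecD !pt0 !pt1; lia.
  - by apply: (step 1 0) => //; rewrite /lee_code !vecD !pt0 !pt1; lia.
have near (y : V 2) : y = v \/ adj v y ->
    exists d0 d1 : int, y = v + pt d0 d1 /\ (absz d0 + absz d1 <= 1)%N.
  case=> [->|/(adj_dim2P (or_introl erefl)) [] ->].
  - by exists 0, 0; split=> //; vec2_eq.
  - by exists 1, 0.
  - by exists (-1), 0.
  - by exists 0, 1.
  - by exists 0, (-1).
exists x; split=> // x' [Px' Hx'].
case: (near _ Hx) => d0 [d1 [Ex B1]]; case: (near _ Hx') => d0' [d1' [Ex' B2]].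
subst x x'.
move: Px Px'; rewrite /lee_code !vecD !pt0 !pt1 => Px Px'.
by vec2_eq.
Qed.

Lemma crc_c1_1_classification n (C : V n -> Prop) rho alpha :
  (1 <= n)%N -> is_CRC C rho alpha -> r_null 2 alpha -> (2 <= rho)%N ->
  alpha 1 0 = 1%N -> alpha 2 1 = 3%N -> n = 2%N /\ params_0413 rho alpha.
Proof.
case: n C => [|[|[|n]]] C Hn HC Hnull Hrho Hc1 Hc2 //.
- by case: (no_crc_dim1 HC Hrho Hc2).
- split=> //; case: (code_ex HC) => c Cc.
  case: (code_knight_pair_dim2 HC Hnull Hrho Hc1 Hc2 Cc) => sg [Hsg Cp1 Cp2].
  exact: (params_dim2 HC Hnull Hrho Hc1 Hc2 Hsg Cc Cp1 Cp2).
- by case: (no_crc_c1_1_dim_ge3 HC Hnull Hrho Hc1 Hc2 (isT : (3 <= n.+3)%N)).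
Qed.

Local Close Scope ring_scope.

Theorem mainTheorem5 :
  (* (1) *)
  (forall n : nat, (1 <= n)%N ->
     ((exists (C : V n -> Prop) (rho : nat) (alpha : nat -> nat -> nat),
         is_CRC C rho alpha /\ r_null 2 alpha /\ (2 <= rho)%N /\
         alpha 1 0 = 1%N /\ alpha 2 1 = 3%N)
      <-> n = 2%N)) /\
  (forall (n : nat) (C : V n -> Prop) (rho : nat) (alpha : nat -> nat -> nat),
     (1 <= n)%N -> is_CRC C rho alpha -> r_null 2 alpha -> (2 <= rho)%N ->
     alpha 1 0 = 1%N -> alpha 2 1 = 3%N ->
     n = 2%N /\ params_0413 rho alpha) /\
  (exists P : V 2 -> Prop, perfect_code P /\
     exists alpha : nat -> nat -> nat,
       is_CRC (fun x => P x /\ ~~ odd (weight x)) 3 alpha /\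
       params_0413 3 alpha) /\
  (* (2) *)
  (forall n : nat, (1 <= n)%N ->
     ~ (exists (C : V n -> Prop) (rho : nat) (alpha : nat -> nat -> nat),
          is_CRC C rho alpha /\ r_null 2 alpha /\ (2 <= rho)%N /\
          alpha 1 0 = 2%N /\ alpha 2 1 = 3%N)).
Proof.
split; [|split; [exact: crc_c1_1_classification | split]].
- move=> n Hn; split=> [[C [rho [alpha [HC [Hnull [Hrho [Hc1 Hc2]]]]]]] | ->].
    exact: (proj1 (crc_c1_1_classification Hn HC Hnull Hrho Hc1 Hc2)).
  exists even_lee_code, 3, alpha_even_lee; split; first exact: even_lee_crc.
  by split=> [[|[|i]]|].
- exists lee_code; split; first exact: lee_code_perfect.
  by exists alpha_even_lee; split; first exact: even_lee_crc.
- move=> n _ [C [rho [alpha [HC [Hnull [Hrho [Hc1 Hc2]]]]]]].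
  exact: (no_crc_c1_2 HC Hnull Hrho Hc1 Hc2).
Qed.
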